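(* For every $n \geq 1$, $c(\Gamma_n) \geq \left\lfloor \frac{n+5}{6} \right\rfloor$ and $c(\Lambda_n) \geq \left\lfloor \frac{n+5}{6} \right\rfloor$.
   Context: The Fibonacci cube $\Gamma_n$ is the subgraph of the hypercube $Q_n$ (vertex set $\{0,1\}^n$, adjacency = differing in exactly one position) induced by all binary strings of length $n$ containing no two consecutive 1's. The Lucas cube $\Lambda_n$ is the subgraph of $Q_n$ induced by all binary strings $x_1\cdots x_n$ with no two consecutive 1's and not having both $x_1 = 1$ and $x_n = 1$. Cops and Robbers: $k$ cops choose starting vertices, then the robber does; in each round all cops move (to a neighbor or stay), then the robber moves (to a neighbor or stays); cops win if some cop occupies the robber's vertex. The cop number $c(G)$ is the minimum $k$ for which the cops can guarantee capture. *)

From mathcomp Require Import all_boot.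
Set Implicit Arguments. Unset Strict Implicit. Unset Printing Implicit Defensive.

(* Binary strings x_1 ... x_n are n-tuples of booleans; position i (0-based)
   is [nth false x i]. *)

Definition qadj (n : nat) (x y : n.-tuple bool) : bool :=
  #|[pred i : 'I_n | tnth x i != tnth y i]| == 1.

Definition fibb (n : nat) (x : n.-tuple bool) : bool :=
  [forall i : 'I_n, (i.+1 < n) ==> ~~ (nth false x i && nth false x i.+1)].

Definition lucb (n : nat) (x : n.-tuple bool) : bool :=
  fibb x && ~~ (nth false x 0 && nth false x n.-1).

Definition FibV (n : nat) : finType := {x : n.-tuple bool | fibb x}.
Definition LucV (n : nat) : finType := {x : n.-tuple bool | lucb x}.

Definition fib_adj (n : nat) : rel (FibV n) := fun x y => qadj (val x) (val y).
Definition luc_adj (n : nat) : rel (LucV n) := fun x y => qadj (val x) (val y).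

Definition cops_move (V : finType) (e : rel V) (k : nat)
  (c c' : {ffun 'I_k -> V}) : Prop :=
  forall i, c' i = c i \/ e (c i) (c' i).

Definition caught (V : finType) (k : nat) (c : {ffun 'I_k -> V}) (r : V) : Prop :=
  exists i, c i = r.

(* [cops_force e c r]: in the position where the cops are at [c], the robber
   at [r] (not yet caught) and it is the cops' turn, the cops can guarantee
   capture in finitely many rounds (least fixpoint = attractor of the
   reachability game). *)
Inductive cops_force (V : finType) (e : rel V) (k : nat) :
    {ffun 'I_k -> V} -> V -> Prop :=
| cf_step c r c' :
    cops_move e c c' ->
    (caught c' r \/
     forall r', (r' = r \/ e r r') -> caught c' r' \/ cops_force e c' r') ->
    cops_force e c r.

Definition cops_win (V : finType) (e : rel V) (k : nat) : Prop :=
  exists c0 : {ffun 'I_k -> V},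
    forall r0 : V, caught c0 r0 \/ cops_force e c0 r0.

Definition cop_number_ge (V : finType) (e : rel V) (m : nat) : Prop :=
  forall k, cops_win e k -> m <= k.

From mathcomp Require Import all_boot zify.
Set Implicit Arguments. Unset Strict Implicit. Unset Printing Implicit Defensive.

(* The words whose 1's lie only at the m = n/3 positions 3j+1 (0-based, with
   room for a 0 on both sides) form a copy of the hypercube Q_m inside both
   Γ_n and Λ_n. The robber stays on this subcube: standing at v, he may stay
   or flip one of the m grid bits, i.e. he has m+1 options, and a cop at
   w != v is at distance <= 1 from at most two of them. So against k cops with 2k < m+1 he can
   always move to a vertex at Hamming distance >= 2 from every cop, where no
   cop can reach him in one move. Finally k < (n+5)/6 implies 2k <= n/3. *)

Lemma card_bigcup_le (I T : finType) (P : pred I) (F : I -> {set T}) :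
  #|\bigcup_(i | P i) F i| <= \sum_(i | P i) #|F i|.
Proof.
elim/big_rec2: _ => [|i s U _ leUs]; first by rewrite cards0.
by rewrite (leq_trans (leq_card_setU _ _).1) ?leq_add2l.
Qed.

Lemma exists_notin_small_sets (T : finType) k b (F : 'I_k -> {set T}) :
  (forall i, #|F i| <= b) -> b * k < #|T| -> exists x, forall i, x \notin F i.
Proof.
move=> leFb ltT.
have leU : #|\bigcup_(i < k) F i| <= b * k.
  apply: leq_trans (card_bigcup_le _ _) _.
  by rewrite -[k in b * k]card_ord mulnC -sum_nat_const leq_sum.
have [x] : exists x, x \in ~: \bigcup_(i < k) F i.
  by apply/card_gt0P; have := cardsC (\bigcup_(i < k) F i); lia.
rewrite inE => xU.
by exists x => i; apply: contra xU => xFi; apply/bigcupP; exists i.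
Qed.

Section Evasion.
Variables (V : finType) (e : rel V) (k : nat).
Implicit Types (c : {ffun 'I_k -> V}) (u v : V).

Definition safe c u := forall i, c i <> u /\ ~~ e (c i) u.

Variable R : pred V.
Hypothesis escape : forall c v, R v -> (forall i, c i <> v) ->
  exists u, [/\ R u, u = v \/ e v u & safe c u].

Lemma safe_not_cops_force c r : cops_force e c r -> R r -> safe c r -> False.
Proof.
(* The generated induction scheme of [cops_force] has no hypothesis for its
   occurrence under the disjunction, hence the explicit fixpoint. *)
move: c r; fix IH 3 => c r [{}c {}r c' mv_c' next] Rr safe_r.
have free_r : forall i, c' i <> r.
  move=> i c'r; have [ne_cr not_adj] := safe_r i.
  case: (mv_c' i) => [c'c | adj]; first by apply: ne_cr; rewrite -c'c.
  by move: not_adj; rewrite -c'r adj.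
case: next => [[i /free_r] // | next].
have [u [Ru mv_u safe_u]] := escape Rr free_r.
case: (next u mv_u) => [[i c'u] | cf_u]; first by case: (safe_u i).
exact: IH cf_u Ru safe_u.
Qed.

Hypothesis free_start : forall c, exists v, R v /\ forall i, c i <> v.

Lemma not_cops_win : ~ cops_win e k.
Proof.
case=> c0 win; have [v [Rv free_v]] := free_start c0.
have [u [Ru _ safe_u]] := escape Rv free_v.
case: (win u) => [[i c0u] | cf]; first by case: (safe_u i).
exact: safe_not_cops_force cf Ru safe_u.
Qed.

End Evasion.

Section Hamming.
Variable n : nat.
Implicit Types (x y : n.-tuple bool) (p : 'I_n).

Definition hamming x y := #|[pred i : 'I_n | tnth x i != tnth y i]|.

Definition flip x p : n.-tuple bool :=
  [tuple if i == p then ~~ tnth x i else tnth x i | i < n].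

Lemma tnth_flip x p i : tnth (flip x p) i = (if i == p then ~~ tnth x i else tnth x i).
Proof. by rewrite tnth_mktuple. Qed.

Lemma hamming_eq0 x y : (hamming x y == 0) = (x == y).
Proof.
apply/idP/eqP => [/eqP/card0_eq eq_xy | ->].
  by apply: eq_from_tnth => i; apply/eqP/negbFE; have := eq_xy i; rewrite !inE.
by apply/eqP/eq_card0 => i; rewrite !inE eqxx.
Qed.

Lemma hammingxx x : hamming x x = 0.
Proof. by apply/eqP; rewrite hamming_eq0. Qed.

Lemma hamming_flip x y p :
  hamming x (flip y p) = if tnth x p != tnth y p then (hamming x y).-1
                         else (hamming x y).+1.
Proof.
set D := [set i | tnth x i != tnth y i].
have -> : hamming x y = #|D| by rewrite /hamming cardsE.
have flipD : [pred i | tnth x i != tnth (flip y p) i] =i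
    (if tnth x p != tnth y p then D :\ p else p |: D).
  move=> i; rewrite !inE tnth_flip.
  by case: (boolP (tnth x p != tnth y p)) => Hp; rewrite ?inE;
     case: (i =P p) => [->|_] //=; move: Hp; case: (tnth x p); case: (tnth y p).
rewrite /hamming (eq_card flipD); case: ifP => Hp.
  by rewrite (cardsD1 p D) inE Hp.
by rewrite cardsU1 inE Hp.
Qed.

Lemma hamming_flipr x p : hamming x (flip x p) = 1.
Proof. by rewrite hamming_flip eqxx hammingxx. Qed.

Lemma hamming_le1 x y : hamming x y <= 1 -> x = y \/ qadj x y.
Proof.
rewrite leq_eqVlt ltnS leqn0 hamming_eq0.
by case/orP => [eq_1 | /eqP ->]; [right | left].
Qed.

Lemma hamming_gt1 x y : 1 < hamming x y -> x <> y /\ ~~ qadj x y.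
Proof.
move=> gt1; split; first by move=> eq_xy; move: gt1; rewrite eq_xy hammingxx.
by rewrite /qadj -/(hamming x y) gtn_eqF.
Qed.

End Hamming.

Section GridSubcube.
Variable n : nat.
Local Notation word := (n.-tuple bool).
Local Notation m := (n %/ 3).

Lemma grid_pos_subproof (j : 'I_m) : 3 * j + 1 < n.
Proof. have := ltn_ord j; lia. Qed.

Definition grid_pos (j : 'I_m) : 'I_n := Ordinal (grid_pos_subproof j).

Lemma grid_pos_inj : injective grid_pos.
Proof. by move=> a b /(congr1 val) /= eq_ab; apply: val_inj => /=; lia. Qed.

(* [None] is the robber standing still. *)
Definition grid_move (v : word) (j : option 'I_m) : word :=
  if j is Some a then flip v (grid_pos a) else v.

Lemma hamming_grid_move v j : hamming v (grid_move v j) <= 1.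
Proof. by case: j => [a|] /=; rewrite ?hamming_flipr ?hammingxx. Qed.

Lemma grid_move_inj v : injective (grid_move v).
Proof.
have flip_eq a j : grid_move v (Some a) = grid_move v j -> j = Some a.
  move/(congr1 (fun x => tnth x (grid_pos a))); case: j => [b|] /=; rewrite !tnth_flip eqxx.
    rewrite (inj_eq grid_pos_inj); case: (a =P b) => [-> // | _].
    by case: (tnth v _).
  by case: (tnth v _).
by case=> [a|] [b|] eq_ab; rewrite ?(flip_eq _ _ eq_ab) ?(flip_eq _ _ (esym eq_ab)).
Qed.

(* Each grid bit where w and v differ brings w one closer when flipped, and
   every other move takes it one farther; hence only [None] (when w is a
   neighbour of v) or one of at most two such flips (when hamming w v = 2)
   can land within distance 1 of w. *)
Lemma card_grid_moves_near (v w : word) :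
  w != v -> #|[set j | hamming w (grid_move v j) <= 1]| <= 2.
Proof.
move=> ne_wv; set d := hamming w v.
have d_gt0 : 0 < d by rewrite lt0n hamming_eq0.
set S := [set j : 'I_m | tnth w (grid_pos j) != tnth v (grid_pos j)].
have leSd : #|S| <= d.
  rewrite -(card_imset S grid_pos_inj) /d /hamming.
  apply/subset_leq_card/subsetP => i /imsetP[j Sj ->]; rewrite inE in Sj.
  exact: Sj.
have near_sub : [set j | hamming w (grid_move v j) <= 1] \subset
    (if d == 1 then [set None] else set0) :|: (if d <= 2 then Some @: S else set0).
  apply/subsetP => -[a|]; rewrite !inE /= ?hamming_flip -/d.
    case: ifP => Sa le1; last by lia.
    have -> : d <= 2 by lia.
    by rewrite mem_imset ?inE ?Sa ?orbT //; move=> x y [].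
  by move=> le1; rewrite eqn_leq le1 d_gt0 inE eqxx.
apply: leq_trans (subset_leq_card near_sub) _.
rewrite cardsU; have := card_imset S (@Some_inj _).
by case: (d =P 1) => [d1|_]; case: ifP => le_d2 card_S;
   rewrite ?cards1 ?cards0 ?card_S; lia.
Qed.

Lemma exists_far_grid_move k (f : 'I_k -> word) v :
  2 * k <= m -> (forall i, f i != v) ->
  exists j, forall i, 1 < hamming (f i) (grid_move v j).
Proof.
move=> le_km ne_fv.
have lt_card : 2 * k < #|{: option 'I_m}| by rewrite card_option card_ord.
have [j far_j] := exists_notin_small_sets
  (fun i => card_grid_moves_near (ne_fv i)) lt_card.
by exists j => i; move: (far_j i); rewrite inE -ltnNge.
Qed.

Lemma exists_free_grid_move k (f : 'I_k -> word) v :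
  k <= m -> exists j, forall i, f i != grid_move v j.
Proof.
move=> le_km.
have card_hit i : #|[set j | f i == grid_move v j]| <= 1.
  rewrite -(card_imset _ (@grid_move_inj v)).
  apply: leq_trans (eq_leq (cards1 (f i))).
  by apply/subset_leq_card/subsetP => y /imsetP[j]; rewrite !inE => /eqP -> ->.
have lt_card : 1 * k < #|{: option 'I_m}| by rewrite card_option card_ord; lia.
have [j free_j] := exists_notin_small_sets card_hit lt_card.
by exists j => i; move: (free_j i); rewrite inE.
Qed.

Definition grid_word (x : word) :=
  [forall i : 'I_n, tnth x i ==> (i %% 3 == 1) && (i.+2 <= n)].

Lemma grid_word_move v j : grid_word v -> grid_word (grid_move v j).
Proof.
case: j => [a|] //= /forallP grid_v; apply/forallP => i; rewrite tnth_flip.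
case: (i =P grid_pos a) => [-> | _]; last exact: grid_v.
by apply/implyP => _; have := ltn_ord a; rewrite /=; lia.
Qed.

Lemma grid_word0 : grid_word [tuple false | _ < n].
Proof. by apply/forallP => i; rewrite tnth_mktuple. Qed.

Lemma grid_word_nth x i : grid_word x -> nth false x i -> (i %% 3 == 1) && (i.+2 <= n).
Proof.
move/forallP => grid_x; case: (ltnP i n) => [lt_in | le_ni].
  by rewrite -(tnth_nth false x (Ordinal lt_in)); apply/implyP/grid_x.
by rewrite nth_default ?size_tuple.
Qed.

Lemma grid_word_fibb x : grid_word x -> fibb x.
Proof.
move=> grid_x; apply/forallP => i; apply/implyP => _; apply/negP => /andP[xi xi1].
by have := grid_word_nth grid_x xi; have := grid_word_nth grid_x xi1; lia.
Qed.

Lemma grid_word_lucb x : grid_word x -> lucb x.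
Proof.
move=> grid_x; rewrite /lucb grid_word_fibb //=; apply/negP => /andP[x0 _].
by have := grid_word_nth grid_x x0.
Qed.

Lemma not_cops_win_grid (P : pred word) k :
  (forall x, grid_word x -> P x) -> 2 * k <= m ->
  ~ cops_win (fun x y : {x : word | P x} => qadj (val x) (val y)) k.
Proof.
move=> grid_P le_km; set e := (fun x y : {x : word | P x} => _).
pose move_to (v : {x : word | P x}) j (grid_v : grid_word (val v)) :=
  exist (fun x => P x) (grid_move (val v) j) (grid_P _ (grid_word_move j grid_v)).
apply: (@not_cops_win _ e k (fun x => grid_word (val x))) => [c v grid_v free_v | c].
  have ne_cv i : val (c i) != val v by apply/eqP => /val_inj; apply: free_v.
  have [j far_j] := exists_far_grid_move le_km ne_cv.
  exists (move_to v j grid_v); split; first exact: grid_word_move.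
    case: (hamming_le1 (hamming_grid_move (val v) j)) => [eq_vu | adj]; last by right.
    by left; apply: val_inj; rewrite /= -eq_vu.
  move=> i; have [ne_cu not_adj] := hamming_gt1 (far_j i).
  by split=> // /(congr1 val).
have le_k_m : k <= m by lia.
have [j free_j] := exists_free_grid_move (fun i => val (c i)) [tuple false | _ < n] le_k_m.
exists (exist (fun x => P x) _ (grid_P _ (grid_word_move j grid_word0))).
split=> [|i /(congr1 val) /eqP]; first exact: grid_word_move grid_word0.
exact/negP/free_j.
Qed.

End GridSubcube.

Theorem corollary3p3 (n : nat) : 1 <= n ->
  cop_number_ge (@fib_adj n) ((n + 5) %/ 6) /\
  cop_number_ge (@luc_adj n) ((n + 5) %/ 6).
Proof.
move=> _; have le_km k : k < (n + 5) %/ 6 -> 2 * k <= n %/ 3 by lia.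
split=> k win; rewrite leqNgt; apply/negP => /le_km le_km'.
  exact: not_cops_win_grid (@grid_word_fibb n) le_km' win.
exact: not_cops_win_grid (@grid_word_lucb n) le_km' win.
Qed.
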